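(* Let $\lambda_0,\lambda_1\in\mathbb{R}$, $a<b$, and $f:[a,b]\to\mathbb{C}$ twice continuously differentiable. Then $$|D_{\lambda_0}f(a)|\le 4\frac{e^{(|\lambda_0|+|\lambda_1|)(b-a)}}{b-a}\max\{|f(a)|,|f(b)|\}+2\max_{t\in[a,b]}|D_{\lambda_1}D_{\lambda_0}f(t)|\,(b-a)\,e^{|\lambda_1|(b-a)}.$$
   Context: For $\lambda\in\mathbb{C}$, $D_\lambda f=f'-\lambda f$ (one-sided derivatives at endpoints). *)

From Stdlib Require Import Reals.
Open Scope R_scope.

(* f' is the derivative of f on [a,b], taken within [a,b]
   (so one-sided derivatives at the endpoints). *)
Definition deriv_within (a b : R) (f f' : R -> R) : Prop :=
  forall x, a <= x <= b ->
    limit1_in (fun y => (f y - f x) / (y - x))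
              (fun y => a <= y <= b /\ y <> x) (f' x) x.

Definition cont_within (a b : R) (g : R -> R) : Prop :=
  forall x, a <= x <= b -> limit1_in g (fun y => a <= y <= b) (g x) x.

Definition C2_within (a b : R) (f f1 f2 : R -> R) : Prop :=
  deriv_within a b f f1 /\ deriv_within a b f1 f2 /\ cont_within a b f2.

(* D_lam f = f' - lam f, given f and its derivative f1 *)
Definition Dl (lam : R) (f f1 : R -> R) : R -> R := fun t => f1 t - lam * f t.

(* modulus of the complex number x + i y *)
Definition cmod (x y : R) : R := sqrt (x ^ 2 + y ^ 2).

(* Write L = b - a.  For a real function p, the weighted mean value theorem
   applied to t |-> exp(-l (t - a)) p t gives, for every s in [a, b], a point
   c in [a, s] with
       exp(-l (s - a)) p s - p a = exp(-l (c - a)) (D_l p)(c) (s - a).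
   1. With l = l0 and s = b this yields xi in [a, b] with
          |D_{l0} p (xi)| L <= 2 exp(|l0| L) max(|p a|, |p b|).
   2. With l = l1, s = xi and the function q = D_{l0} p it transports this
      bound back to a:  |q a| <= exp(|l1| L) (|q xi| + L sup |D_{l1} q|).
   Together they prove the real version of the estimate, with constants 2
   and 1 instead of 4 and 2.  The complex case reduces to the real one by
   projecting f onto the direction of w = D_{l0} f(a): for
   p = Re(conj(w) f) one has D_{l0} p (a) = |w|^2, while by Cauchy-Schwarz
   every real quantity in the estimate for p is at most |w| times the
   corresponding complex one; dividing by |w| concludes.

   Since the derivatives in the hypotheses are taken within [a, b], the mean
   value theorem is applied to the extension of p by constants outside
   [a, b] (clamping the argument), which is continuous on R and
   differentiable on (a, b). *)

From Stdlib Require Import Reals Lra.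
From Coquelicot Require Import Coquelicot.
Open Scope R_scope.

Definition clamp (a b x : R) : R := Rmax a (Rmin b x).

Lemma clamp_id (a b x : R) : a <= x <= b -> clamp a b x = x.
Proof. intros. unfold clamp, Rmax, Rmin; repeat destruct Rle_dec; lra. Qed.

Lemma clamp_in (a b x : R) : a <= b -> a <= clamp a b x <= b.
Proof. intros. unfold clamp, Rmax, Rmin; repeat destruct Rle_dec; lra. Qed.

Lemma clamp_lipschitz (a b x y : R) :
  a <= b -> Rabs (clamp a b x - clamp a b y) <= Rabs (x - y).
Proof. intros. unfold clamp, Rmax, Rmin; repeat destruct Rle_dec; split_Rabs; lra. Qed.

Lemma limit1_in_ext (f g : R -> R) (D : R -> Prop) (l x : R) :
  (forall y, D y -> f y = g y) -> limit1_in f D l x -> limit1_in g D l x.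
Proof.
  intros Hfg Hf eps Heps. destruct (Hf eps Heps) as [alp [Halp Hlim]].
  exists alp; split; auto.
  intros y [Dy Hy]. rewrite <- Hfg by auto. apply Hlim; auto.
Qed.

Lemma deriv_within_lin (a b al be : R) (f f' g g' : R -> R) :
  deriv_within a b f f' -> deriv_within a b g g' ->
  deriv_within a b (fun t => al * f t + be * g t) (fun t => al * f' t + be * g' t).
Proof.
  intros Hf Hg x Hx.
  apply limit1_in_ext with
    (fun y => (fun _ => al) y * ((f y - f x) / (y - x))
              + (fun _ => be) y * ((g y - g x) / (y - x))).
  { intros y _. unfold Rdiv. ring. }
  apply limit_plus; apply limit_mul.
  - apply (limit_free (fun _ => al) _ x x).
  - apply Hf; auto.
  - apply (limit_free (fun _ => be) _ x x).
  - apply Hg; auto.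
Qed.

Lemma deriv_within_Dl (a b l : R) (f f1 f2 : R -> R) :
  deriv_within a b f f1 -> deriv_within a b f1 f2 ->
  deriv_within a b (Dl l f f1) (Dl l f1 f2).
Proof.
  intros Hf Hf1 x Hx.
  assert (Hlin := deriv_within_lin a b 1 (- l) f1 f2 f f1 Hf1 Hf x Hx).
  replace (Dl l f1 f2 x) with (1 * f2 x + - l * f1 x) by (unfold Dl; ring).
  apply limit1_in_ext with (2 := Hlin). intros y _. unfold Dl, Rdiv. ring.
Qed.

Lemma deriv_within_continuous (a b : R) (f f' : R -> R) (x : R) :
  deriv_within a b f f' -> a <= x <= b ->
  limit1_in f (fun y => a <= y <= b) (f x) x.
Proof.
  intros Hd Hx eps Heps.
  destruct (Hd x Hx 1 ltac:(lra)) as [alp [Halp Hlim]].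
  set (K := Rabs (f' x) + 1).
  assert (HK : 0 < K) by (unfold K; pose proof (Rabs_pos (f' x)); lra).
  exists (Rmin alp (eps / K)). split.
  { apply Rmin_glb_lt; auto. apply Rdiv_lt_0_compat; auto. }
  intros y [Dy Hy]. simpl in *. unfold R_dist in *.
  destruct (Req_dec y x) as [->|Hne].
  { rewrite Rminus_diag, Rabs_R0; lra. }
  assert (Hy_alp : Rabs (y - x) < alp) by (eapply Rlt_le_trans; [exact Hy | apply Rmin_l]).
  assert (Hy_eps : Rabs (y - x) * K < eps).
  { apply Rmult_lt_reg_r with (/ K). apply Rinv_0_lt_compat; auto.
    rewrite Rmult_assoc, Rinv_r, Rmult_1_r by lra.
    eapply Rlt_le_trans; [exact Hy | apply Rmin_r]. }
  (* the difference quotient is bounded by K near x *)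
  specialize (Hlim y (conj (conj Dy Hne) Hy_alp)). simpl in Hlim. unfold R_dist in Hlim.
  assert (Hq : Rabs ((f y - f x) / (y - x)) < K).
  { unfold K. pose proof (Rabs_triang_inv ((f y - f x) / (y - x)) (f' x)). lra. }
  replace (f y - f x) with ((f y - f x) / (y - x) * (y - x)) by (field; lra).
  rewrite Rabs_mult.
  pose proof (Rabs_pos ((f y - f x) / (y - x))).
  assert (0 < Rabs (y - x)) by (apply Rabs_pos_lt; lra).
  nra.
Qed.

Lemma clamp_continuous (a b : R) (f f' : R -> R) (x : R) :
  a < b -> deriv_within a b f f' -> continuity_pt (fun t => f (clamp a b t)) x.
Proof.
  intros Hab Hd eps Heps.
  destruct (deriv_within_continuous a b f f' (clamp a b x) Hd
              (clamp_in a b x ltac:(lra)) eps Heps) as [alp [Halp Hlim]].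
  exists alp; split; auto. intros y [_ Hy]. simpl in *. unfold R_dist in *.
  apply Hlim. split; [apply clamp_in; lra |]. simpl. unfold R_dist.
  eapply Rle_lt_trans; [apply clamp_lipschitz; lra | auto].
Qed.

Lemma clamp_derivable (a b : R) (f f' : R -> R) (c : R) :
  deriv_within a b f f' -> a < c < b ->
  derivable_pt_lim (fun t => f (clamp a b t)) c (f' c).
Proof.
  intros Hd Hc eps Heps.
  destruct (Hd c ltac:(lra) eps Heps) as [alp [Halp Hlim]].
  set (del := Rmin alp (Rmin (c - a) (b - c))).
  assert (Hdel : 0 < del) by (repeat apply Rmin_glb_lt; lra).
  assert (Hdel_alp : del <= alp) by apply Rmin_l.
  assert (Hdel_ab : del <= c - a /\ del <= b - c).
  { pose proof (Rmin_r alp (Rmin (c - a) (b - c))).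
    pose proof (Rmin_l (c - a) (b - c)). pose proof (Rmin_r (c - a) (b - c)).
    unfold del; lra. }
  exists (mkposreal _ Hdel). intros h Hh Hlt. simpl in Hlt.
  assert (Hin : a <= c + h <= b) by (split_Rabs; lra).
  rewrite (clamp_id a b (c + h)), (clamp_id a b c) by lra.
  specialize (Hlim (c + h)). simpl in Hlim. unfold R_dist in Hlim.
  replace (c + h - c) with h in Hlim by ring.
  apply Hlim. split; [split; [lra | intro E; apply Hh; lra] | lra].
Qed.

(* Weighted mean value theorem: the mean value theorem for exp(-l (t - a)) f t
   on [a, s], whose derivative is exp(-l (t - a)) (D_l f)(t). *)
Lemma exp_weighted_mvt (a b l s : R) (f f1 : R -> R) :
  a < b -> deriv_within a b f f1 -> a <= s <= b ->
  exists c, a <= c <= s /\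
    exp (- l * (s - a)) * f s - f a = exp (- l * (c - a)) * Dl l f f1 c * (s - a).
Proof.
  intros Hab Hd Hs.
  assert (Hexp : forall x, derivable_pt_lim (fun t => exp (- l * (t - a))) x
                             (- l * exp (- l * (x - a)))).
  { intros x. apply is_derive_Reals. auto_derive; auto. unfold Rminus. ring. }
  destruct (MVT_gen (fun t => exp (- l * (t - a)) * f (clamp a b t)) a s
              (fun t => exp (- l * (t - a)) * Dl l f f1 t)) as [c [Hc E]].
  - rewrite Rmin_left, Rmax_right by lra. intros x Hx.
    apply is_derive_Reals.
    assert (Hprod := derivable_pt_lim_mult _ _ _ _ _ (Hexp x)
                       (clamp_derivable a b f f1 x Hd ltac:(lra))).
    unfold mult_fct in Hprod. rewrite (clamp_id a b x) in Hprod by lra.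
    replace (exp (- l * (x - a)) * Dl l f f1 x)
      with (- l * exp (- l * (x - a)) * f x + exp (- l * (x - a)) * f1 x)
      by (unfold Dl; ring).
    exact Hprod.
  - intros x _. apply continuity_pt_mult.
    + apply derivable_continuous_pt. exact (exist _ _ (Hexp x)).
    + exact (clamp_continuous a b f f1 x Hab Hd).
  - rewrite Rmin_left, Rmax_right in Hc by lra.
    exists c. split; auto.
    rewrite (clamp_id a b s), (clamp_id a b a) in E by lra.
    rewrite <- E. replace (- l * (a - a)) with 0 by ring. rewrite exp_0. ring.
Qed.

Lemma exp_le_abs (l t L : R) : 0 <= t <= L -> exp (l * t) <= exp (Rabs l * L).
Proof.
  intros Ht.
  assert (Hle : l * t <= Rabs l * L).
  { eapply Rle_trans; [apply Rle_abs |].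
    rewrite Rabs_mult, (Rabs_pos_eq t) by lra.
    apply Rmult_le_compat_l; [apply Rabs_pos | lra]. }
  destruct Hle as [Hlt | ->]; [left; apply exp_increasing; auto | lra].
Qed.

Lemma Dl_small_somewhere (a b l K : R) (p p1 : R -> R) :
  a < b -> deriv_within a b p p1 -> Rabs (p a) <= K -> Rabs (p b) <= K ->
  exists xi, a <= xi <= b /\
    Rabs (Dl l p p1 xi) * (b - a) <= 2 * exp (Rabs l * (b - a)) * K.
Proof.
  intros Hab Hp Ha Hb.
  destruct (exp_weighted_mvt a b l b p p1 Hab Hp ltac:(lra)) as [xi [Hxi E]].
  exists xi. split; [lra |].
  (* multiplying the mean value identity by exp(l (xi - a)) *)
  assert (Hid : Dl l p p1 xi * (b - a)
                = exp (- l * (b - xi)) * p b - exp (l * (xi - a)) * p a).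
  { assert (Hexp : exp (l * (xi - a)) * exp (- l * (xi - a)) = 1).
    { rewrite <- exp_plus, <- exp_0. f_equal. ring. }
    replace (exp (- l * (b - xi))) with (exp (l * (xi - a)) * exp (- l * (b - a)))
      by (rewrite <- exp_plus; f_equal; ring).
    transitivity (exp (l * (xi - a)) * exp (- l * (xi - a)) * Dl l p p1 xi * (b - a)).
    { rewrite Hexp. ring. }
    rewrite Rmult_assoc, Rmult_assoc, <- (Rmult_assoc _ (Dl _ _ _ _)), <- E. ring. }
  assert (Hwb : exp (- l * (b - xi)) <= exp (Rabs l * (b - a))).
  { rewrite <- (Rabs_Ropp l). apply exp_le_abs. lra. }
  assert (Hwa : exp (l * (xi - a)) <= exp (Rabs l * (b - a))) by (apply exp_le_abs; lra).
  pose proof (exp_pos (- l * (b - xi))). pose proof (exp_pos (l * (xi - a))).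
  replace (Rabs (Dl l p p1 xi) * (b - a)) with (Rabs (Dl l p p1 xi * (b - a)))
    by (rewrite Rabs_mult, (Rabs_pos_eq (b - a)); lra).
  rewrite Hid. unfold Rminus at 1.
  eapply Rle_trans; [apply Rabs_triang |].
  rewrite Rabs_Ropp, !Rabs_mult, !(Rabs_pos_eq (exp _)) by lra.
  pose proof (Rabs_pos (p a)). pose proof (Rabs_pos (p b)).
  assert (exp (- l * (b - xi)) * Rabs (p b) <= exp (Rabs l * (b - a)) * K) by nra.
  assert (exp (l * (xi - a)) * Rabs (p a) <= exp (Rabs l * (b - a)) * K) by nra.
  lra.
Qed.

Lemma Dl_transport (a b l M xi : R) (q q1 : R -> R) :
  a < b -> deriv_within a b q q1 -> a <= xi <= b ->
  (forall t, a <= t <= b -> Rabs (Dl l q q1 t) <= M) ->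
  Rabs (q a) <= exp (Rabs l * (b - a)) * (Rabs (q xi) + M * (b - a)).
Proof.
  intros Hab Hq Hxi HM.
  destruct (exp_weighted_mvt a b l xi q q1 Hab Hq Hxi) as [eta [Heta E]].
  set (C := exp (Rabs l * (b - a))).
  assert (HC : 0 < C) by apply exp_pos.
  assert (Hw_xi : exp (- l * (xi - a)) <= C).
  { unfold C. rewrite <- (Rabs_Ropp l). apply exp_le_abs. lra. }
  assert (Hw_eta : exp (- l * (eta - a)) <= C).
  { unfold C. rewrite <- (Rabs_Ropp l). apply exp_le_abs. lra. }
  assert (HMeta := HM eta ltac:(lra)).
  assert (HM0 : 0 <= M) by (eapply Rle_trans; [apply Rabs_pos | exact HMeta]).
  pose proof (exp_pos (- l * (xi - a))). pose proof (exp_pos (- l * (eta - a))).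
  pose proof (Rabs_pos (q xi)). pose proof (Rabs_pos (Dl l q q1 eta)).
  replace (q a) with (exp (- l * (xi - a)) * q xi
                      - exp (- l * (eta - a)) * Dl l q q1 eta * (xi - a)) by lra.
  unfold Rminus at 1. eapply Rle_trans; [apply Rabs_triang |].
  rewrite Rabs_Ropp, !Rabs_mult, !(Rabs_pos_eq (exp _)), (Rabs_pos_eq (xi - a)) by lra.
  assert (exp (- l * (xi - a)) * Rabs (q xi) <= C * Rabs (q xi)) by nra.
  assert (Hr : exp (- l * (eta - a)) * Rabs (Dl l q q1 eta) <= C * M) by nra.
  assert (exp (- l * (eta - a)) * Rabs (Dl l q q1 eta) * (xi - a) <= C * M * (b - a)).
  { apply Rle_trans with (C * M * (xi - a)); [apply Rmult_le_compat_r; lra |].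
    apply Rmult_le_compat_l; [nra | lra]. }
  lra.
Qed.

Lemma real_estimate (a b l0 l1 K M : R) (p p1 p2 : R -> R) :
  a < b -> deriv_within a b p p1 -> deriv_within a b p1 p2 ->
  Rabs (p a) <= K -> Rabs (p b) <= K ->
  (forall t, a <= t <= b -> Rabs (Dl l1 (Dl l0 p p1) (Dl l0 p1 p2) t) <= M) ->
  Rabs (Dl l0 p p1 a) <=
    2 * (exp ((Rabs l0 + Rabs l1) * (b - a)) / (b - a)) * K
    + M * (b - a) * exp (Rabs l1 * (b - a)).
Proof.
  intros Hab Hp Hp1 Ha Hb HM.
  destruct (Dl_small_somewhere a b l0 K p p1 Hab Hp Ha Hb) as [xi [Hxi Hsmall]].
  assert (Htr := Dl_transport a b l1 M xi _ _ Hab (deriv_within_Dl a b l0 p p1 p2 Hp Hp1)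
                   Hxi HM).
  rewrite Rmult_plus_distr_r, exp_plus.
  set (E0 := exp (Rabs l0 * (b - a))) in *. set (C := exp (Rabs l1 * (b - a))) in *.
  assert (Hxi_bd : Rabs (Dl l0 p p1 xi) <= 2 * E0 * K / (b - a)).
  { apply Rmult_le_reg_r with (b - a); [lra |].
    unfold Rdiv. rewrite Rmult_assoc, Rinv_l, Rmult_1_r by lra. exact Hsmall. }
  assert (HC : 0 < C) by apply exp_pos.
  replace (2 * (E0 * C / (b - a)) * K) with (C * (2 * E0 * K / (b - a)))
    by (field; lra).
  nra.
Qed.

Lemma cmod_cauchy_schwarz (al be x y : R) :
  Rabs (al * x + be * y) <= cmod al be * cmod x y.
Proof.
  unfold cmod. rewrite <- sqrt_mult by nra.
  rewrite <- sqrt_Rsqr_abs. apply sqrt_le_1; [apply Rle_0_sqr | nra |].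
  pose proof (Rle_0_sqr (al * y - be * x)). unfold Rsqr in *. nra.
Qed.

Lemma cmod_sqr (x y : R) : cmod x y * cmod x y = x * x + y * y.
Proof. unfold cmod. rewrite sqrt_sqrt by nra. ring. Qed.

Lemma le_of_mul_self_le (x y : R) : 0 <= x -> 0 <= y -> x * x <= x * y -> x <= y.
Proof. intros Hx Hy H. destruct Hx as [Hx | <-]; [nra | lra]. Qed.

Lemma estimate_terms_nonneg (a b l0 l1 K M : R) :
  a < b -> 0 <= K -> 0 <= M ->
  0 <= exp ((Rabs l0 + Rabs l1) * (b - a)) / (b - a) * K /\
  0 <= M * (b - a) * exp (Rabs l1 * (b - a)).
Proof.
  intros Hab HK HM. split.
  - apply Rmult_le_pos; [apply Rdiv_le_0_compat; [apply Rlt_le, exp_pos | lra] | exact HK].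
  - apply Rmult_le_pos; [apply Rmult_le_pos; lra | apply Rlt_le, exp_pos].
Qed.

(* The complex estimate, with constants 2 and 1: apply the real estimate to
   p = Re(conj(w) f) with w = w1 + i w2 = D_{l0} f(a), for which
   D_{l0} p (a) = |w|^2, and divide by |w|. *)
Lemma complex_estimate (l0 l1 a b M : R) (u u1 u2 v v1 v2 : R -> R) :
  a < b ->
  deriv_within a b u u1 -> deriv_within a b u1 u2 ->
  deriv_within a b v v1 -> deriv_within a b v1 v2 ->
  (forall t, a <= t <= b ->
     cmod (Dl l1 (Dl l0 u u1) (Dl l0 u1 u2) t)
          (Dl l1 (Dl l0 v v1) (Dl l0 v1 v2) t) <= M) ->
  cmod (Dl l0 u u1 a) (Dl l0 v v1 a) <=
    2 * (exp ((Rabs l0 + Rabs l1) * (b - a)) / (b - a))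
      * Rmax (cmod (u a) (v a)) (cmod (u b) (v b))
    + M * (b - a) * exp (Rabs l1 * (b - a)).
Proof.
  intros Hab Hu Hu1 Hv Hv1 HM.
  set (w1 := Dl l0 u u1 a). set (w2 := Dl l0 v v1 a). set (N := cmod w1 w2).
  set (K := Rmax (cmod (u a) (v a)) (cmod (u b) (v b))).
  set (E := exp ((Rabs l0 + Rabs l1) * (b - a)) / (b - a)).
  set (C := exp (Rabs l1 * (b - a))).
  assert (HN : 0 <= N) by apply sqrt_pos.
  assert (HM0 : 0 <= M) by (eapply Rle_trans; [apply sqrt_pos | apply (HM a); lra]).
  assert (HK : 0 <= K) by (eapply Rle_trans; [apply sqrt_pos | apply Rmax_l]).
  destruct (estimate_terms_nonneg a b l0 l1 K M Hab HK HM0) as [HEK HMC].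
  fold E C in HEK, HMC.
  assert (Hreal := real_estimate a b l0 l1 (N * K) (N * M)
     (fun t => w1 * u t + w2 * v t) (fun t => w1 * u1 t + w2 * v1 t)
     (fun t => w1 * u2 t + w2 * v2 t) Hab
     (deriv_within_lin a b w1 w2 u u1 v v1 Hu Hv)
     (deriv_within_lin a b w1 w2 u1 u2 v1 v2 Hu1 Hv1)).
  fold E C in Hreal.
  assert (Hproj : Dl l0 (fun t => w1 * u t + w2 * v t) (fun t => w1 * u1 t + w2 * v1 t) a
                  = N * N) by (unfold N; rewrite cmod_sqr; unfold w1, w2, Dl; ring).
  rewrite Hproj in Hreal.
  apply le_of_mul_self_le; [exact HN | lra |].
  apply Rle_trans with (2 * E * (N * K) + N * M * (b - a) * C); [| right; ring].
  rewrite <- (Rabs_pos_eq (N * N)) by nra. apply Hreal.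
  - eapply Rle_trans; [apply cmod_cauchy_schwarz | apply Rmult_le_compat_l, Rmax_l; auto].
  - eapply Rle_trans; [apply cmod_cauchy_schwarz | apply Rmult_le_compat_l, Rmax_r; auto].
  - intros t Ht. eapply Rle_trans; [| apply Rmult_le_compat_l, (HM t Ht); auto].
    eapply Rle_trans; [| apply cmod_cauchy_schwarz]. right. f_equal. unfold Dl. ring.
Qed.

Theorem mainTheorem19 (l0 l1 a b : R) (u u1 u2 v v1 v2 : R -> R) (M : R) :
  a < b ->
  C2_within a b u u1 u2 ->
  C2_within a b v v1 v2 ->
  (forall t, a <= t <= b ->
     cmod (Dl l1 (Dl l0 u u1) (Dl l0 u1 u2) t)
          (Dl l1 (Dl l0 v v1) (Dl l0 v1 v2) t) <= M) ->
  cmod (Dl l0 u u1 a) (Dl l0 v v1 a) <=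
    4 * (exp ((Rabs l0 + Rabs l1) * (b - a)) / (b - a))
      * Rmax (cmod (u a) (v a)) (cmod (u b) (v b))
    + 2 * M * (b - a) * exp (Rabs l1 * (b - a)).
Proof.
  intros Hab [Hu [Hu1 _]] [Hv [Hv1 _]] HM.
  assert (Hest := complex_estimate l0 l1 a b M u u1 u2 v v1 v2 Hab Hu Hu1 Hv Hv1 HM).
  (* the stated constants 4 and 2 are twice the ones obtained *)
  assert (HM0 : 0 <= M) by (eapply Rle_trans; [apply sqrt_pos | apply (HM a); lra]).
  assert (HK : 0 <= Rmax (cmod (u a) (v a)) (cmod (u b) (v b)))
    by (eapply Rle_trans; [apply sqrt_pos | apply Rmax_l]).
  destruct (estimate_terms_nonneg a b l0 l1 _ M Hab HK HM0) as [HEK HMC].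
  lra.
Qed.
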